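(* Let $q$ be an odd prime power, $\lambda$ a divisor of $q+1$ with $2\le\lambda<q+1$, $m=2t+1\ge5$, and $n=\frac{q^m+1}{\lambda}$. For integers $a,b,c$ let $f(a,b,c)=\frac{q^{t+1}+1}{\lambda}+a\frac{q^t-1}{\lambda}+bq^t+c$ and $g(a,b,c)=\frac{q^{t+1}-1}{\lambda}+a\frac{q^t+1}{\lambda}+bq^t+c$. If $t$ is even, let $T_1=\{f(0,0,c):c\in\mathbb{Z},-\frac q\lambda\le c\le\frac{q-2}{\lambda}\}$, $T_2=\{f(0,b,0):b\in\mathbb{Z},1\le b\le\frac{q-1}{\lambda}\}$, $T_3=\{f(2,b,0):b\in\mathbb{Z},0\le b\le\frac{q-3}{\lambda}\}$. If $t$ is odd, let $T_1=\{g(0,0,c):c\in\mathbb{Z},-\frac{q-2}{\lambda}\le c\le\frac q\lambda\}$, $T_2=\{g(0,b,0):b\in\mathbb{Z},1\le b\le\frac{q-1}{\lambda}\}$, $T_3=\{g(2,b,0):b\in\mathbb{Z},0\le b\le\frac{q-3}{\lambda}\}$. Then: (1) every integer $i$ with $1\le i<\frac{2q^{t+1}-2q+1}{\lambda}$, $i\not\equiv0\pmod q$ and $i\notin T_1\cup T_2\cup T_3$ is a coset leader modulo $n$ with $|C_i|=2m$, while no element of $T_1\cup T_2\cup T_3$ (with $i\not\equiv 0\pmod q$) is a coset leader modulo $n$; (2) no integer $i$ with $\frac{2q^{t+1}-2q+1}{\lambda}\le i\le\frac{2q^{t+1}+2q-1}{\lambda}$ is a coset leader modulo $n$.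
   Context: For $0\le s\le n-1$, $C_s=\{sq^i\bmod n:i\ge0\}$ is the $q$-cyclotomic coset of $s$ modulo $n$; its least element is its coset leader. *)

From HB Require Import structures.
From mathcomp Require Import all_boot all_order all_algebra.
From mathcomp Require Import boolp.
Set Implicit Arguments. Unset Strict Implicit. Unset Printing Implicit Defensive.
Import Order.TTheory GRing.Theory Num.Theory.

Definition prime_power (q : nat) : Prop :=
  exists p k : nat, prime p /\ 0 < k /\ q = p ^ k.

Definition cyc_coset (q n s : nat) (x : nat) : Prop :=
  exists i : nat, x = (s * q ^ i) %% n.

Definition cyc_coset_set (q n s : nat) : {set 'I_n} :=
  [set x : 'I_n | `[< cyc_coset q n s (nat_of_ord x) >] ].

Definition coset_leader (q n s : nat) : Prop :=
  cyc_coset q n s s /\ forall x, cyc_coset q n s x -> s <= x.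

(* f(a,b,c) and g(a,b,c) as integers (the divisions are exact in the
   parity cases where they are used). *)
Definition f_val (q lam t : nat) (a b : nat) (c : int) : int :=
  (((q ^ t.+1 + 1) %/ lam)%N)%:Z + (a * ((q ^ t - 1) %/ lam))%N%:Z
  + (b * q ^ t)%N%:Z + c.

Definition g_val (q lam t : nat) (a b : nat) (c : int) : int :=
  (((q ^ t.+1 - 1) %/ lam)%N)%:Z + (a * ((q ^ t + 1) %/ lam))%N%:Z
  + (b * q ^ t)%N%:Z + c.

Local Open Scope ring_scope.

Definition in_T (q lam t : nat) (i : nat) : Prop :=
  if ~~ odd t then
    (exists c : int, - (q%:Z) <= c * lam%:Z /\ c * lam%:Z <= q%:Z - 2
                     /\ i%:Z = f_val q lam t 0 0 c)
    \/ (exists b : nat, (1 <= b)%N /\ (b * lam <= q - 1)%N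
                     /\ i%:Z = f_val q lam t 0 b 0)
    \/ (exists b : nat, (b * lam <= q - 3)%N
                     /\ i%:Z = f_val q lam t 2 b 0)
  else
    (exists c : int, - (q%:Z - 2) <= c * lam%:Z /\ c * lam%:Z <= q%:Z
                     /\ i%:Z = g_val q lam t 0 0 c)
    \/ (exists b : nat, (1 <= b)%N /\ (b * lam <= q - 1)%N
                     /\ i%:Z = g_val q lam t 0 b 0)
    \/ (exists b : nat, (b * lam <= q - 3)%N
                     /\ i%:Z = g_val q lam t 2 b 0).

(* Scale by lam: put N = lam * n = q^m + 1 = q Q^2 + 1 with Q = q^t, and I = lam * i.
   Then i leads C_i iff I is the least of the residues I q^j mod N, and since
   q^m = -1 (mod N) these residues come in pairs x, N - x.  Hence i is a leader
   with |C_i| = 2m as soon as I < I q^j mod N < N - I for 0 < j < m, while one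
   residue outside [I, N - I] rules i out.  Writing I = A q^(m-j) + r gives
   I q^j = r q^j - A (mod N), and comparing sizes shows that this residue stays
   in the band unless I is within q of qQ or I = AQ +- 1 with q <= A < 2q.
   Modulo lam, where q = -1 and Q = (-1)^t, these exceptional values are exactly
   lam (T_1 u T_2 u T_3); for them, and for I near 2qQ, the residue of IQ or of
   IqQ leaves the band. *)

From HB Require Import structures.
From mathcomp Require Import all_boot all_order all_algebra.
From mathcomp Require Import boolp zify.

Set Implicit Arguments. Unset Strict Implicit. Unset Printing Implicit Defensive.
Import GRing.Theory Num.Theory.

Lemma modn_pred_mul_add X A B M :
  X = A * M + B -> A <= B -> B - A <= M -> X %% (M + 1) = B - A.
Proof.
move=> -> le_AB le_BA_M.
have -> : A * M + B = A * (M + 1) + (B - A) by nia.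
by rewrite modnMDl modn_small //; lia.
Qed.

Lemma modn_mul_pred X M : 0 < X %% (M + 1) -> (X * M) %% (M + 1) = M + 1 - X %% (M + 1).
Proof.
move=> X_gt0; rewrite -modnMml.
have X_lt : X %% (M + 1) < M + 1 by rewrite ltn_pmod // addn1.
by rewrite (@modn_pred_mul_add _ (X %% (M + 1) - 1) M M); nia.
Qed.

Lemma modn_expn_double q m d :
  0 < q -> 1 < d -> d %| q ^ m + 1 -> q ^ (2 * m) %% d = 1.
Proof.
move=> q_gt0 d_gt1 /dvdnP[k qm1_eq].
have qm_gt0 : 0 < q ^ m by rewrite expn_gt0 q_gt0.
have -> : q ^ (2 * m) = (q ^ m - 1) * k * d + 1.
  by rewrite -mulnA -qm1_eq mulnC expnM; move: qm_gt0; move: (q ^ m) => x; nia.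
by rewrite modnMDl modn_small.
Qed.

Lemma dvdz_expn_sub_signr (q lam k : nat) :
  lam %| q + 1 -> (lam%:Z %| (q%:Z ^+ k - (-1) ^+ k)%R)%Z.
Proof.
move=> lam_dvd; have q_eq : (q%:Z = -1 %[mod lam])%Z.
  by apply/eqP; rewrite eqz_mod_dvd opprK -[(_ + 1)%R]PoszD.
by rewrite -eqz_mod_dvd; apply/eqP; rewrite -modzXm q_eq modzXm.
Qed.

Lemma dvdn_expn_add1 q lam k : lam %| q + 1 -> odd k -> lam %| q ^ k + 1.
Proof.
move=> lam_dvd k_odd; have := dvdz_expn_sub_signr k lam_dvd.
by rewrite -signr_odd k_odd expr1 opprK (_ : (_ + 1)%R = ((q ^ k + 1)%N%:Z)%R) //; lia.
Qed.

Lemma dvdn_expn_sub1 q lam k : 0 < q -> lam %| q + 1 -> ~~ odd k -> lam %| q ^ k - 1.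
Proof.
move=> q_gt0 lam_dvd /negbTE k_even.
have qk_gt0 : 0 < q ^ k by rewrite expn_gt0 q_gt0.
have := dvdz_expn_sub_signr k lam_dvd.
by rewrite -signr_odd k_even expr0 (_ : (_ - 1)%R = ((q ^ k - 1)%N%:Z)%R) //; lia.
Qed.

Section CyclotomicCosets.

Variables q n : nat.

Lemma modn_mul_expn_period p s e :
  q ^ p %% n = 1 -> (s * q ^ e) %% n = (s * q ^ (e %% p)) %% n.
Proof.
move=> qp1; rewrite {1}(divn_eq e p) expnD (mulnC (e %/ p)) expnM mulnCA -modnMml.
by rewrite -modnXm qp1 exp1n modnMml mul1n.
Qed.

Lemma not_coset_leader s e : (s * q ^ e) %% n < s -> ~ coset_leader q n s.
Proof. by move=> lt_s [_ /(_ _ (ex_intro _ e erefl))]; rewrite leqNgt lt_s. Qed.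

Lemma coset_leader_of_le s :
  s < n -> (forall e, s <= (s * q ^ e) %% n) -> coset_leader q n s.
Proof.
move=> s_lt_n le_s; split=> [|x [e ->]] //.
by exists 0; rewrite expn0 muln1 modn_small.
Qed.

Lemma dvd_not_coset_leader p s :
  0 < p -> q ^ p %% n = 1 -> 1 < q -> q %| s -> 0 < s -> ~ coset_leader q n s.
Proof.
move=> p_gt0 qp1 q_gt1 /dvdnP[s' ->] s_gt0.
apply: (@not_coset_leader _ p.-1).
rewrite -mulnA -expnS prednK // -modnMmr qp1.
apply: leq_ltn_trans (leq_mod _ _) _; rewrite muln1 ltn_Pmulr //.
by move: s_gt0; rewrite muln_gt0 => /andP[].
Qed.

Lemma card_cyc_coset_set p s :
  0 < n -> 0 < p -> q ^ p %% n = 1 ->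
  (forall d, 0 < d < p -> (s * q ^ d) %% n != s %% n) ->
  #|cyc_coset_set q n s| = p.
Proof.
move=> n_gt0 p_gt0 qp1 no_return.
pose f (j : 'I_p) : 'I_n := Ordinal (ltn_pmod (s * q ^ j) n_gt0).
have -> : cyc_coset_set q n s = f @: setT.
  apply/setP => x; rewrite inE; apply/asboolP/imsetP => [[e xE]|[j _ ->]].
    exists (Ordinal (ltn_pmod e p_gt0)) => //; apply: val_inj.
    by rewrite /= xE (modn_mul_expn_period _ _ qp1).
  by exists j.
have f_neq (a b : 'I_p) : a < b -> f a != f b.
  move=> lt_ab; apply/eqP => /(congr1 (fun x : 'I_n => (x * q ^ (p - b)) %% n)).
  rewrite /= !modnMml -!mulnA -!expnD subnKC ?(ltnW (ltn_ord b)) //.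
  rewrite [in X in _ = X](modn_mul_expn_period _ _ qp1) modnn expn0 muln1 => E.
  have : 0 < a + (p - b) < p by have := ltn_ord b; lia.
  by move/no_return; rewrite E eqxx.
rewrite card_imset ?cardsT ?card_ord // => a b eq_ab.
by case: (ltngtP a b) => [/f_neq|/f_neq|/val_inj] //; rewrite eq_ab ?eqxx.
Qed.

End CyclotomicCosets.

Definition in_band (N I x : nat) : Prop := I < x /\ x + I < N.

Definition outside_band (N I x : nat) : Prop := x < I \/ N < x + I.

Section ScaledCosets.

Variables q lam n m i : nat.
Hypothesis lam_gt0 : 0 < lam.
Hypothesis lam_n : lam * n = q ^ m + 1.

Local Notation N := (lam * n).
Local Notation I := (lam * i).
Local Notation rot e := ((I * q ^ e) %% N).

Lemma rot_scale e : rot e = lam * ((i * q ^ e) %% n).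
Proof. by rewrite muln_modr mulnA. Qed.

Lemma rot_addm e : 0 < rot e -> rot (e + m) = N - rot e.
Proof. by rewrite expnD mulnA lam_n; apply: modn_mul_pred. Qed.

Lemma not_coset_leader_outside e : outside_band N I (rot e) -> ~ coset_leader q n i.
Proof.
have below (e' : nat) : rot e' < I -> ~ coset_leader q n i.
  by rewrite rot_scale ltn_pmul2l //; apply: not_coset_leader.
case=> [/below //|above].
have [rot0|rot_gt0] := posnP (rot e); first by apply: (below e); lia.
by apply: (below (e + m)); rewrite rot_addm //; lia.
Qed.

Lemma coset_leader_in_band :
  0 < m -> 0 < i -> 2 * I < N ->
  (forall j, 0 < j < m -> in_band N I (rot j)) ->
  coset_leader q n i /\ #|cyc_coset_set q n i| = 2 * m.
Proof.
move=> m_gt0 i_gt0 I_half band.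
have i_lt_n : i < n by rewrite -(ltn_pmul2l lam_gt0); lia.
have rot0 : rot 0 = I by rewrite expn0 muln1 modn_small //; lia.
have rot_gt (d : nat) : 0 < d < 2 * m -> I < rot d.
  case/andP=> d_gt0 d_lt; have [d_lt_m|m_le_d] := ltnP d m.
    by case: (band d); rewrite ?d_gt0.
  have rot_band : I <= rot (d - m) /\ rot (d - m) + I < N.
    have [->|j_gt0] := posnP (d - m); first by rewrite rot0; lia.
    by case: (band (d - m)); [lia | split; lia].
  by rewrite -(subnK m_le_d) rot_addm; lia.
have qm1 : q ^ (2 * m) %% n = 1.
  apply: modn_expn_double; last by rewrite -lam_n dvdn_mull.
  - by case: q lam_n => [|//]; rewrite exp0n //; nia.
  - by rewrite -(ltn_pmul2l lam_gt0); nia.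
split.
- apply: coset_leader_of_le => // e.
  rewrite (modn_mul_expn_period _ _ qm1) -(leq_pmul2l lam_gt0) -rot_scale.
  have [->|e_gt0] := posnP (e %% (2 * m)); first by rewrite rot0.
  by apply/ltnW/rot_gt; rewrite e_gt0 ltn_pmod // muln_gt0.
- apply: card_cyc_coset_set; rewrite ?muln_gt0 //; first lia.
  move=> d /rot_gt.
  by rewrite (modn_small i_lt_n) rot_scale ltn_pmul2l // => /gtn_eqF ->.
Qed.

End ScaledCosets.

(* For I = lam * i and Q = q^t this says i \in T_1 u T_2 u T_3, but without
   reference to the parity of t. *)
Definition exceptional (q Q I : nat) : Prop :=
  (exists e : int, `|e| < q%:Z /\ I%:Z = (q * Q)%:Z + e)%R \/
  (exists (A : nat) (delta : int),
     q <= A < 2 * q /\ (delta = 1 \/ delta = -1)%R /\ (I%:Z = (A * Q)%:Z + delta)%R).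

Section Rotations.

Variables q Q : nat.
Hypothesis q_ge3 : 3 <= q.
Hypothesis qq_le_Q : q * q <= Q.

Local Notation N := (q * Q * Q + 1).

Lemma in_band_mul_small I P :
  0 < I <= 2 * q * Q - 2 * q -> 3 <= P -> P * q <= Q ->
  in_band N I ((I * P) %% N).
Proof. by move=> I_bounds P_ge3 Pq_le_Q; rewrite /in_band modn_small; nia. Qed.

Lemma in_band_mul_large I K P :
  0 < I <= 2 * q * Q - 2 * q -> K * P = q * Q * Q -> q <= K -> q * q * Q <= P ->
  0 < I %% K -> in_band N I ((I * P) %% N).
Proof.
move=> I_bounds KP q_le_K P_ge r_gt0.
have r_lt : I %% K < K by rewrite ltn_pmod //; lia.
have I_eq := divn_eq I K.
move: (I %/ K) (I %% K) I_eq r_lt r_gt0 => A r I_eq r_lt r_gt0.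
have A_le : 3 * A <= 2 * q * Q by nia.
have rP_le : r * P + P <= q * Q * Q.
  have : r * P <= (K - 1) * P by apply: leq_mul => //; lia.
  by rewrite -KP; nia.
rewrite /in_band (@modn_pred_mul_add _ A (r * P)); nia.
Qed.

Lemma in_band_mulQ_or_exceptional I :
  0 < I <= 2 * q * Q - 2 * q -> ~~ (q %| I) ->
  in_band N I ((I * Q) %% N) \/ exceptional q Q I.
Proof.
move=> I_bounds q_ndvd_I.
have [I_lt|I_ge] := ltnP I (q * Q).
  have [near|far] := ltnP (q * Q - I) q.
    by right; left; exists (I%:Z - (q * Q)%:Z)%R; lia.
  by left; rewrite /in_band modn_small; nia.
have [r I_eq] : exists r, I = q * Q + r by exists (I - q * Q); lia.
subst I.
have [near|far] := ltnP r q.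
  by right; left; exists (r%:Z)%R; lia.
have r_neq_q : r != q by apply: contraNneq q_ndvd_I => ->; rewrite dvdn_addr ?dvdn_mulr.
by left; rewrite /in_band (@modn_pred_mul_add _ 1 (r * Q)); nia.
Qed.

Lemma in_band_mul_qQ_or_exceptional I :
  0 < I <= 2 * q * Q - 2 * q -> 0 < I %% Q ->
  in_band N I ((I * (q * Q)) %% N) \/ exceptional q Q I.
Proof.
move=> I_bounds r_gt0.
have r_lt : I %% Q < Q by rewrite ltn_pmod //; nia.
have I_eq := divn_eq I Q.
move: (I %/ Q) (I %% Q) I_eq r_lt r_gt0 => A r I_eq r_lt r_gt0.
have A_lt : A < 2 * q by nia.
have [A_lt_q|A_ge_q] := ltnP A q.
  left; rewrite /in_band (@modn_pred_mul_add _ A (r * (q * Q))); nia.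
have [r1|r_gt1] := eqVneq r 1.
  by right; right; exists A, 1%R; lia.
have [rQ|r_neq] := eqVneq r (Q - 1).
  by right; right; exists A.+1, (-1)%R; nia.
left; rewrite /in_band (@modn_pred_mul_add _ A (r * (q * Q))); nia.
Qed.

Lemma outside_band_near_qQ I (e : int) :
  (`|e| < q%:Z)%R -> (I%:Z = (q * Q)%:Z + e)%R -> outside_band N I ((I * Q) %% N).
Proof.
move=> e_small I_eq.
have [e_le0|e_gt0] : (e <= 0 \/ 0 < e)%R by lia.
  by right; rewrite modn_small; nia.
have [r r_def] : exists r, I = q * Q + r by exists (I - q * Q); lia.
by left; rewrite (@modn_pred_mul_add _ 1 (r * Q)); nia.
Qed.

Lemma outside_band_AQ_add1 I A :
  q <= A < 2 * q -> I = A * Q + 1 -> outside_band N I ((I * (q * Q)) %% N).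
Proof. by move=> A_bounds ->; left; rewrite (@modn_pred_mul_add _ A (q * Q)); nia. Qed.

Lemma outside_band_AQ_sub1 I A :
  q < A <= 2 * q -> I + 1 = A * Q -> outside_band N I ((I * (q * Q)) %% N).
Proof.
move=> A_bounds I_eq; right.
by rewrite (@modn_pred_mul_add _ (A - 1) (q * Q * Q - q * Q)); nia.
Qed.

Lemma exceptional_outside_band I :
  exceptional q Q I ->
  outside_band N I ((I * Q) %% N) \/ outside_band N I ((I * (q * Q)) %% N).
Proof.
move=> [[e [e_small I_eq]]|[A [delta [A_bounds [[delta1|delta1] I_eq]]]]].
- by left; apply: (outside_band_near_qQ e_small I_eq).
- by right; apply: (outside_band_AQ_add1 A_bounds); lia.
- have [A_eq|A_gt] := eqVneq A q.
    by left; apply: (@outside_band_near_qQ _ (-1)%R); lia.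
  by right; apply: (@outside_band_AQ_sub1 _ A); lia.
Qed.

Lemma outside_band_near_2qQ I :
  2 * q * Q - 2 * q < I < 2 * q * Q + 2 * q -> I != 2 * q * Q ->
  outside_band N I ((I * Q) %% N).
Proof.
move=> I_bounds I_neq; have [I_lt|I_gt] := ltnP I (2 * q * Q).
  by right; rewrite (@modn_pred_mul_add _ 1 ((I - q * Q) * Q)); nia.
by left; rewrite (@modn_pred_mul_add _ 2 ((I - 2 * q * Q) * Q)); nia.
Qed.

End Rotations.

Lemma in_band_or_exceptional q t I j :
  3 <= q -> 2 <= t -> 0 < I <= 2 * q * q ^ t - 2 * q -> ~~ (q %| I) -> 0 < j <= 2 * t ->
  let N := q * q ^ t * q ^ t + 1 in
  in_band N I ((I * q ^ j) %% N) \/ exceptional q (q ^ t) I.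
Proof.
move=> q_ge3 t_ge2 I_bounds q_ndvd_I j_bounds.
have q_gt0 : 0 < q by lia.
have qq_le_Q : q * q <= q ^ t by rewrite mulnn leq_pexp2l.
have mod_gt0 k : 0 < k -> 0 < I %% q ^ k.
  by move=> k_gt0; rewrite lt0n; apply: contra q_ndvd_I; apply: dvdn_trans (dvdn_exp _ _).
have q_le_expn k : 0 < k -> q <= q ^ k by move=> k_gt0; rewrite -{1}[q]expn1 leq_pexp2l.
have [j_lt|[->|[->|j_gt]]] : j < t \/ j = t \/ j = t.+1 \/ t.+1 < j by lia.
- left; apply: in_band_mul_small => //.
    by apply: leq_trans q_ge3 (q_le_expn _ _); lia.
  by rewrite -expnSr leq_pexp2l.
- exact: in_band_mulQ_or_exceptional.
- by rewrite expnS; apply: in_band_mul_qQ_or_exceptional; rewrite // mod_gt0; lia.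
- left; apply: (@in_band_mul_large _ _ _ _ _ (q ^ (2 * t + 1 - j))); rewrite ?mod_gt0 //.
  + rewrite -expnD subnK; last lia.
    by rewrite -expnS -expnD; congr (_ ^ _); lia.
  + by apply: q_le_expn; lia.
  + by rewrite -mulnA -!expnS leq_pexp2l.
  + lia.
Qed.

(* lam (T_1 u T_2 u T_3) for eps = (-1)^t: lam f(0,0,c) = qQ + eps + c lam,
   lam f(0,b,0) = (q + b lam) Q + eps and lam f(2,b,0) = (q + 2 + b lam) Q - eps,
   likewise for g; the bounds on c amount to |eps + c lam| < q. *)
Definition scaled_T (q lam Q : nat) (eps : int) (I : nat) : Prop :=
  (exists c : int,
     `|eps + c * lam%:Z| < q%:Z /\ I%:Z = (q * Q)%:Z + eps + c * lam%:Z)%R \/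
  (exists b : nat, 0 < b /\ b * lam < q /\ (I%:Z = ((q + b * lam) * Q)%:Z + eps)%R) \/
  (exists b : nat, b * lam + 3 <= q /\ (I%:Z = ((q + 2 + b * lam) * Q)%:Z - eps)%R).

Lemma scaled_T_exceptional q lam Q eps I :
  3 <= q -> (eps = 1 \/ eps = -1)%R -> scaled_T q lam Q eps I -> exceptional q Q I.
Proof.
move=> q_ge3 eps_pm [[c [c_small I_eq]]|[[b [b_gt0 [b_lt I_eq]]]|[b [b_le I_eq]]]].
- by left; exists (eps + c * lam%:Z)%R; rewrite addrA.
- by right; exists (q + b * lam), eps; lia.
- by right; exists (q + 2 + b * lam), (- eps)%R; lia.
Qed.

Section ExceptionalScaledT.

Variables (q lam Q : nat) (eps : int) (i : nat).
Hypothesis q_gt1 : 1 < q.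
Hypothesis lam_ge2 : 2 <= lam.
Hypothesis lam_dvd_q1 : lam %| q + 1.
Hypothesis lam_dvd_Q : (lam%:Z %| (Q%:Z - eps)%R)%Z.
Hypothesis eps_pm : (eps = 1 \/ eps = -1)%R.

Lemma dvdz_qQ_add_eps : (lam%:Z %| ((q * Q)%:Z + eps)%R)%Z.
Proof.
rewrite (_ : _ + _ = q%:Z * (Q%:Z - eps) + eps * (q + 1)%N%:Z)%R; last by lia.
by rewrite rpredD ?dvdz_mull.
Qed.

Lemma scaled_T_near_qQ (e : int) :
  (`|e| < q%:Z)%R -> ((lam * i)%:Z = (q * Q)%:Z + e)%R -> scaled_T q lam Q eps (lam * i).
Proof.
move=> e_small I_eq.
have /dvdzP[c c_eq] : (lam%:Z %| (e - eps)%R)%Z.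
  rewrite (_ : _ - _ = (lam * i)%N%:Z - ((q * Q)%:Z + eps))%R; last by lia.
  by rewrite rpredB ?dvdz_qQ_add_eps // PoszM dvdz_mulr.
by left; exists c; lia.
Qed.

Lemma scaled_T_near_AQ A (delta : int) :
  q <= A < 2 * q -> (delta = 1 \/ delta = -1)%R ->
  ((lam * i)%:Z = (A * Q)%:Z + delta)%R -> scaled_T q lam Q eps (lam * i).
Proof.
move=> A_bounds delta_pm I_eq.
have [a A_eq] : exists a, A = q + a by exists (A - q); lia.
subst A; have /dvdzP[w w_eq] : (lam%:Z %| ((a%:Z - 1) * eps + delta)%R)%Z.
  rewrite (_ : ((a%:Z - 1) * eps + delta =
                 (lam * i)%N%:Z - ((q * Q)%:Z + eps) + a%:Z * (eps - Q%:Z))%R); last by lia.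
  apply: rpredD; first by rewrite rpredB ?dvdz_qQ_add_eps // PoszM dvdz_mulr.
  by rewrite dvdz_mull // -opprB rpredN.
have [k k_eq] : exists k : int, (a%:Z - 1 + eps * delta = k * lam%:Z)%R.
  by case: eps_pm w_eq => -> w_eq; [exists w | exists (- w)%R]; lia.
have eps2 : (eps * eps = 1)%R by case: eps_pm => ->.
have lam_gt0 : (0 < lam%:Z)%R by lia.
have [delta_eq|delta_eq] : delta = eps \/ delta = (- eps)%R by lia.
- subst delta; have k_ge0 : (0 <= k)%R by rewrite -(pmulr_lge0 _ lam_gt0); lia.
  have [b k_def] : exists b : nat, k = (b%:Z)%R by exists `|k|%N; lia.
  subst k; have a_def : a = b * lam by lia.
  subst a; have [b0|b_gt0] := posnP b.
    by left; exists 0%R; lia.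
  by right; left; exists b; lia.
- subst delta; have [a_lt2|a_ge2] := ltnP a 2.
    have k_lt0 : (k < 0)%R by rewrite -(pmulr_llt0 _ lam_gt0); lia.
    have k_lam : (k * lam%:Z <= - lam%:Z)%R by rewrite -mulN1r ler_pM2r //; lia.
    have lam2 : lam = 2 by lia.
    have a0 : a = 0 by lia.
    by left; exists (- eps)%R; rewrite lam2 in I_eq *; lia.
  have k_ge0 : (0 <= k)%R by rewrite -(pmulr_lge0 _ lam_gt0); lia.
  have [b k_def] : exists b : nat, k = (b%:Z)%R by exists `|k|%N; lia.
  subst k; have a_def : a = b * lam + 2 by lia.
  by subst a; right; right; exists b; lia.
Qed.

End ExceptionalScaledT.

(* The left-hand side is [in_T] with [f_val] or [g_val] unfolded, D1 and D2
   standing for its two exact quotients. *)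
Lemma in_T_union_scaled (q lam Q D1 D2 i : nat) (eps lo hi : int) :
  3 <= q -> 0 < lam ->
  ((lam * D1)%:Z = (q * Q)%:Z + eps)%R -> ((lam * D2)%:Z = Q%:Z - eps)%R ->
  (forall c : int, (lo <= c * lam%:Z <= hi) = (`|eps + c * lam%:Z| < q%:Z))%R ->
  (exists c : int, (lo <= c * lam%:Z /\ c * lam%:Z <= hi
                    /\ i%:Z = D1%:Z + (0 * D2)%N%:Z + (0 * Q)%N%:Z + c)%R)
  \/ (exists b : nat, 1 <= b /\ b * lam <= q - 1
                    /\ (i%:Z = D1%:Z + (0 * D2)%N%:Z + (b * Q)%N%:Z + 0)%R)
  \/ (exists b : nat, b * lam <= q - 3
                    /\ (i%:Z = D1%:Z + (2 * D2)%N%:Z + (b * Q)%N%:Z + 0)%R)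
  <-> scaled_T q lam Q eps (lam * i).
Proof.
move=> q_ge3 lam_gt0 D1_eq D2_eq c_bounds.
have scale (x : int) : (i%:Z = x <-> (lam * i)%:Z = lam%:Z * x)%R.
  by rewrite PoszM; split=> [->|eq_lam]; last apply: (mulfI _ eq_lam); lia.
split=> [[[c [c_lo [c_hi /scale I_eq]]]|[[b [b_gt0 [b_le /scale I_eq]]]|[b [b_le /scale I_eq]]]]
        |[[c [c_small I_eq]]|[[b [b_gt0 [b_lt I_eq]]]|[b [b_le I_eq]]]]].
- by left; exists c; rewrite -c_bounds; lia.
- by right; left; exists b; lia.
- by right; right; exists b; lia.
- left; exists c; move: c_small; rewrite -c_bounds.
  by do 2 (split; first lia); apply/scale; lia.
- by right; left; exists b; do 2 (split; first lia); apply/scale; lia.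
- by right; right; exists b; split; [lia | apply/scale; lia].
Qed.

Lemma in_T_scaled q lam t i :
  3 <= q -> 0 < lam -> lam %| q + 1 ->
  in_T q lam t i <-> scaled_T q lam (q ^ t) ((-1) ^+ t)%R (lam * i).
Proof.
move=> q_ge3 lam_gt0 lam_dvd.
have q_gt0 : 0 < q by lia.
have qQ_gt0 : 0 < q * q ^ t by rewrite muln_gt0 expn_gt0 q_gt0.
rewrite /in_T /f_val /g_val -signr_odd expnS; case t_par : (odd t) => /=.
- have /dvdnP[D1 D1_eq] : lam %| q * q ^ t - 1 by rewrite -expnS dvdn_expn_sub1 //= t_par.
  have /dvdnP[D2 D2_eq] : lam %| q ^ t + 1 by rewrite dvdn_expn_add1.
  by rewrite D1_eq D2_eq !mulnK // expr1; apply: in_T_union_scaled => //; lia.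
- have /dvdnP[D1 D1_eq] : lam %| q * q ^ t + 1 by rewrite -expnS dvdn_expn_add1 //= t_par.
  have /dvdnP[D2 D2_eq] : lam %| q ^ t - 1 by rewrite dvdn_expn_sub1 ?t_par.
  by rewrite D1_eq D2_eq !mulnK // expr0; apply: in_T_union_scaled => //; lia.
Qed.

Section CosetLeaders.

Variables q lam t : nat.
Hypothesis q_ge3 : 3 <= q.
Hypothesis lam_ge2 : 2 <= lam.
Hypothesis lam_dvd : lam %| q + 1.
Hypothesis t_ge2 : 2 <= t.

Local Notation Q := (q ^ t).
Local Notation m := (2 * t + 1).
Local Notation n := ((q ^ m + 1) %/ lam).

Let lam_gt0 : 0 < lam. Proof. lia. Qed.

Let lam_n : lam * n = q ^ m + 1.
Proof. by rewrite mulnC divnK // dvdn_expn_add1 // oddD oddM. Qed.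

Let expn_m : q ^ m = q * Q * Q.
Proof. by rewrite addn1 expnS mul2n -addnn expnD mulnA. Qed.

Let qq_le_Q : q * q <= Q.
Proof. by rewrite mulnn leq_pexp2l //; lia. Qed.

Let sign_pm : (((-1) ^+ t : int) = 1 \/ ((-1) ^+ t : int) = -1)%R.
Proof. by rewrite -signr_odd; case: odd; [right | left]. Qed.

Lemma in_T_exceptional i : in_T q lam t i -> exceptional q Q (lam * i).
Proof. by move/(in_T_scaled _ _ q_ge3 lam_gt0 lam_dvd); apply: scaled_T_exceptional. Qed.

Lemma exceptional_in_T i : exceptional q Q (lam * i) -> in_T q lam t i.
Proof.
have lam_dvd_Q : (lam%:Z %| (Q%:Z - (-1) ^+ t)%R)%Z.
  by rewrite (_ : Q%:Z = q%:Z ^+ t)%R ?dvdz_expn_sub_signr //; lia.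
have q_gt1 : 1 < q by lia.
rewrite in_T_scaled // => -[[e [e_small I_eq]]|[A [delta [A_bounds [delta_pm I_eq]]]]].
- exact: (scaled_T_near_qQ q_gt1 lam_ge2 lam_dvd lam_dvd_Q sign_pm e_small I_eq).
- exact: (scaled_T_near_AQ q_gt1 lam_ge2 lam_dvd lam_dvd_Q sign_pm A_bounds delta_pm I_eq).
Qed.

Let q_ndvd_lam_mul i : i %% q != 0 -> ~~ (q %| lam * i).
Proof.
move=> i_mod; rewrite Gauss_dvdr //; apply: coprime_dvdr lam_dvd _.
by rewrite addn1 coprimenS.
Qed.

Lemma coset_leader_not_in_T i :
  0 < i -> i * lam < 2 * q ^ t.+1 - 2 * q + 1 -> i %% q != 0 -> ~ in_T q lam t i ->
  coset_leader q n i /\ #|cyc_coset_set q n i| = 2 * m.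
Proof.
move=> i_gt0 i_small /q_ndvd_lam_mul q_ndvd_I not_T.
have I_bounds : 0 < lam * i <= 2 * q * Q - 2 * q by rewrite expnS in i_small; nia.
have I_half : 2 * (lam * i) < lam * n by rewrite lam_n expn_m; nia.
apply: (coset_leader_in_band lam_gt0 lam_n) => [|||j j_bounds] //; first lia.
have j_le : 0 < j <= 2 * t by lia.
rewrite lam_n expn_m.
by case: (in_band_or_exceptional q_ge3 t_ge2 I_bounds q_ndvd_I j_le) => // /exceptional_in_T.
Qed.

Lemma in_T_not_coset_leader i : in_T q lam t i -> ~ coset_leader q n i.
Proof.
move/in_T_exceptional/(exceptional_outside_band q_ge3 qq_le_Q) => -[out|out].
- by apply: (not_coset_leader_outside lam_gt0 lam_n (e := t)); rewrite lam_n expn_m.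
- by apply: (not_coset_leader_outside lam_gt0 lam_n (e := t.+1)); rewrite lam_n expn_m expnS.
Qed.

Lemma not_coset_leader_near_2qQ i :
  2 * q ^ t.+1 - 2 * q + 1 <= i * lam -> i * lam <= 2 * q ^ t.+1 + 2 * q - 1 ->
  ~ coset_leader q n i.
Proof.
rewrite expnS => i_lo i_hi.
have /andP[i_gt0 _] : (0 < i) && (0 < lam) by rewrite -muln_gt0; lia.
have [q_dvd_i|q_ndvd_i] := boolP (q %| i).
  have lam_le : lam <= q + 1 by apply: dvdn_leq; lia.
  have n_gt1 : 1 < n.
    rewrite -(ltn_pmul2l lam_gt0) muln1 lam_n; apply: leq_ltn_trans lam_le _.
    by rewrite ltn_add2r -{1}[q]expn1 ltn_exp2l; lia.
  apply: (dvd_not_coset_leader (p := 2 * m)) => //; [lia | | lia].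
  apply: modn_expn_double => //; first lia.
  by rewrite -[X in _ %| X]lam_n dvdn_mull.
apply: (not_coset_leader_outside lam_gt0 lam_n (e := t)); rewrite lam_n expn_m.
apply: outside_band_near_2qQ; [by [] | by [] | lia |].
by apply: contraNneq (q_ndvd_lam_mul q_ndvd_i) => ->; rewrite dvdn_mulr // dvdn_mull.
Qed.

End CosetLeaders.

Theorem lemma12 (q lam t : nat) :
  prime_power q -> odd q ->
  (lam %| q + 1)%N -> (2 <= lam)%N -> (lam < q + 1)%N ->
  (2 <= t)%N ->
  let m := (2 * t + 1)%N in
  let n := ((q ^ m + 1) %/ lam)%N in
  (* (1) *)
  (forall i : nat,
      (1 <= i)%N -> (i * lam < 2 * q ^ t.+1 - 2 * q + 1)%N ->
      (i %% q != 0)%N -> ~ in_T q lam t i ->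
      coset_leader q n i /\ #|cyc_coset_set q n i| = (2 * m)%N)
  /\ (forall i : nat, in_T q lam t i -> (i %% q != 0)%N -> ~ coset_leader q n i)
  (* (2) *)
  /\ (forall i : nat,
      (2 * q ^ t.+1 - 2 * q + 1 <= i * lam)%N ->
      (i * lam <= 2 * q ^ t.+1 + 2 * q - 1)%N ->
      ~ coset_leader q n i).
Proof.
move=> _ q_odd lam_dvd lam_ge2 lam_lt t_ge2 m n.
have q_ge3 : 3 <= q.
  have q_neq2 : q <> 2 by move=> q2; rewrite q2 in q_odd.
  lia.
split; [|split].
- exact: coset_leader_not_in_T.
- by move=> i T_i _; apply: in_T_not_coset_leader T_i.
- exact: not_coset_leader_near_2qQ.
Qed.
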